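(* Let $c=0$, so $f_0(z)=z^2$. For $z_0\in\mathbb{C}$ and $q\in(0,1)$ let $(z_q(n))_{n\ge0}$ be the fractional-order Julia sequence defined by $z_q(0)=z_0$ and $$z_q(n)=z_0+\frac{1}{\Gamma(q)}\sum_{i=1}^{n}\frac{\Gamma(n-i+q)}{\Gamma(n-i+1)}\,f_0\big(z_q(i-1)\big),\qquad n\ge1.$$ Then as $q\downarrow 0$ the sequence becomes $z_0,\ z_0^2+z_0,\ (z_0^2+z_0)^2+z_0,\dots$, i.e. for every $n\ge0$, $\lim_{q\downarrow0}z_q(n)=P_{z_0}^{\,n+1}(0)$, where $P_{a}(w)=w^2+a$. Hence the fractional-order filled Julia set for $c=0$ (the set of $z_0$ for which $(z_q(n))$ remains bounded) coincides, in the limit $q\downarrow0$, with the classical Mandelbrot set $\{a\in\mathbb{C}: (P_a^{\,n}(0))_{n\ge1}\text{ bounded}\}$.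
   Context: The recursion is the numerical solution of the Caputo-like fractional difference initial value problem $\Delta^q z(t)=f_c(z(t+q-1))$, $t\in\mathbb{N}_{1-q}$, $z(0)=z_0$, of order $q\in(0,1)$, with $f_c(z)=z^2+c$; for fixed $c$ and variable initial point $z_0$ it defines the fractional-order (filled) Julia map. $\Gamma$ is Euler's Gamma function. *)

From Stdlib Require Import Reals.
From Coquelicot Require Export Coquelicot.
Open Scope R_scope.

Definition Gamma (x : R) : R :=
  RInt_gen (fun t => Rpower t (x - 1) * exp (- t)) (at_right 0) (Rbar_locally p_infty).

Definition P (a w : C) : C := Cplus (Cmult w w) a.

Definition Piter (a : C) (k : nat) : C := Nat.iter k (P a) (RtoC 0).

Definition Mandelbrot (a : C) : Prop :=
  exists M : R, forall n : nat, (1 <= n)%nat -> Cmod (Piter a n) <= M.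

Definition frac_julia_seq (q : R) (z0 : C) (z : nat -> C) : Prop :=
  z 0%nat = z0 /\
  forall n : nat, (1 <= n)%nat ->
    z n = Cplus z0
      (Cmult (RtoC (/ Gamma q))
        (sum_n_m (fun i : nat =>
           Cmult (RtoC (Gamma (INR (n - i) + q) / Gamma (INR (n - i) + 1)))
                 (Cmult (z (i - 1)%nat) (z (i - 1)%nat))) 1 n)).

From Stdlib Require Import Reals Lra Lia Classical.
From Coquelicot Require Import Coquelicot.
Open Scope R_scope.

(* Pulling 1/Gamma(q) into the sum gives
     z_q(n+1) = z0 + z_q(n)^2 + sum_(k=1..n) w_k(q) z_q(n-k)^2,
     w_k(q) = Gamma(k+q) / (Gamma(q) Gamma(k+1)),
   where the weight of z_q(n)^2 is 1 because Gamma(1) = 1. Since Gamma(q) >= 1/(2eq) while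
   Gamma(k+q) stays bounded for k >= 1, every w_k(q) is O(q). By strong induction on n,
   z_q(n) -> P_{z0}^(n+1)(0) as q -> 0+, so the limit sequence is the critical orbit of P_{z0}
   shifted by one, which is bounded iff z0 lies in the Mandelbrot set. Gamma is an improper
   integral, so its existence and bounds come from the monotone limit of the partial integrals
   of the nonnegative integrand. *)

Lemma is_lub_approx (E : R -> Prop) (m eps : R) :
  is_lub E m -> 0 < eps -> exists y, E y /\ m - eps < y.
Proof.
  intros [_ Hleast] Heps.
  apply NNPP. intros Hnone.
  assert (m <= m - eps) by
    (apply Hleast; intros y Ey; apply Rnot_lt_le; intros Hy; apply Hnone; exists y; auto).
  lra.
Qed.

Lemma ln_lt_self (y : R) : 0 < y -> ln y < y.
Proof.
  intros Hy. rewrite <- (ln_exp y) at 2. apply ln_increasing; auto.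
  pose proof (exp_ineq1_le y). lra.
Qed.

Lemma ln_ge0 (t : R) : 1 <= t -> 0 <= ln t.
Proof.
  intros Ht. rewrite <- ln_1. destruct (Rle_lt_or_eq_dec 1 t Ht) as [Hlt | <-].
  - apply Rlt_le, ln_increasing; lra.
  - apply Rle_refl.
Qed.

Lemma RInt_le_RInt_widen (f : R -> R) (a' a b b' : R) :
  a' <= a -> a <= b -> b <= b' -> ex_RInt f a' b' ->
  (forall t, a' <= t <= b' -> 0 <= f t) -> RInt f a b <= RInt f a' b'.
Proof.
  intros Ha Hab Hb Hf Hpos.
  assert (Ha'b : ex_RInt f a' b)
    by (apply (@ex_RInt_Chasles_1 R_CompleteNormedModule) with b'; [lra | exact Hf]).
  assert (Ha'a : ex_RInt f a' a)
    by (apply (@ex_RInt_Chasles_1 R_CompleteNormedModule) with b; [lra | exact Ha'b]).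
  assert (Hab' : ex_RInt f a b)
    by (apply (@ex_RInt_Chasles_2 R_CompleteNormedModule) with a'; [lra | exact Ha'b]).
  assert (Hbb' : ex_RInt f b b')
    by (apply (@ex_RInt_Chasles_2 R_CompleteNormedModule) with a'; [lra | exact Hf]).
  rewrite <- (RInt_Chasles f a' b b'), <- (RInt_Chasles f a' a b) by auto.
  assert (0 <= RInt f a' a) by (apply RInt_ge_0; auto; intros; apply Hpos; lra).
  assert (0 <= RInt f b b') by (apply RInt_ge_0; auto; intros; apply Hpos; lra).
  unfold plus; simpl. lra.
Qed.

Lemma ex_RInt_of_ex_derive_pos (f : R -> R) (a b : R) :
  0 < a -> 0 < b -> (forall t, 0 < t -> ex_derive f t) -> ex_RInt f a b.
Proof.
  intros Ha Hb Hf. apply (@ex_RInt_continuous R_CompleteNormedModule).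
  intros t Ht. apply (@ex_derive_continuous R_AbsRing R_NormedModule), Hf.
  assert (0 < Rmin a b) by (apply Rmin_glb_lt; auto). lra.
Qed.

Lemma RInt_exp_half_le (K b : R) :
  1 <= b -> RInt (fun t => exp (K - t / 2)) 1 b <= 2 * exp K.
Proof.
  intros Hb.
  rewrite (is_RInt_unique _ 1 b (-2 * exp (K - b / 2) - -2 * exp (K - 1 / 2))).
  - assert (exp (K - 1 / 2) <= exp K) by (apply Rlt_le, exp_increasing; lra).
    pose proof (exp_pos (K - b / 2)). lra.
  - apply (@is_RInt_derive R_CompleteNormedModule (fun t => -2 * exp (K - t / 2))).
    + intros t _. auto_derive; auto. unfold Rminus, Rdiv. field.
    + intros t _. apply (@ex_derive_continuous R_AbsRing R_NormedModule). auto_derive. auto.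
Qed.

Lemma RInt_Rpower_pred (x a : R) :
  0 < a -> 0 < x -> RInt (fun t => Rpower t (x - 1)) a 1 = (1 - Rpower a x) / x.
Proof.
  intros Ha Hx. apply is_RInt_unique.
  replace ((1 - Rpower a x) / x) with (Rpower 1 x / x - Rpower a x / x)
    by (unfold Rpower at 1; rewrite ln_1, Rmult_0_r, exp_0; field; lra).
  assert (Hmin : 0 < Rmin a 1) by (apply Rmin_glb_lt; lra).
  apply (@is_RInt_derive R_CompleteNormedModule (fun t => Rpower t x / x)).
  - intros t Ht. unfold Rpower. auto_derive; [lra |].
    replace ((x - 1) * ln t) with (x * ln t + - ln t) by ring.
    rewrite exp_plus, exp_Ropp, exp_ln by lra. field. lra.
  - intros t Ht. apply (@ex_derive_continuous R_AbsRing R_NormedModule).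
    unfold Rpower. auto_derive. lra.
Qed.

Lemma is_RInt_gen_nonneg_bounded (f : R -> R) (M : R) :
  (forall a b, 0 < a -> 0 < b -> ex_RInt f a b) ->
  (forall t, 0 < t -> 0 <= f t) ->
  (forall a b, 0 < a -> a < b -> RInt f a b <= M) ->
  exists l, is_RInt_gen f (at_right 0) (Rbar_locally p_infty) l /\
    (forall a b, 0 < a -> a < b -> RInt f a b <= l) /\ l <= M.
Proof.
  intros Hex Hpos HM.
  set (E := fun y => exists a b, 0 < a /\ a < b /\ y = RInt f a b).
  assert (HEM : forall y, E y -> y <= M) by (intros y (a & b & Ha & Hab & ->); auto).
  assert (HE12 : E (RInt f 1 2)) by (exists 1, 2; repeat split; lra).
  destruct (completeness E (ex_intro _ M HEM) (ex_intro _ _ HE12)) as [l Hl].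
  assert (Hle : forall a b, 0 < a -> a < b -> RInt f a b <= l)
    by (intros a b Ha Hab; apply (proj1 Hl); exists a, b; auto).
  exists l. split; [| split; [exact Hle | apply (proj2 Hl); exact HEM]].
  apply filterlimi_lim_ext_loc with (f := fun ab => RInt f (fst ab) (snd ab)).
  - exists (fun a => 0 < a) (fun b => 0 < b).
    + exists (mkposreal 1 Rlt_0_1). intros a _ Ha. exact Ha.
    + exists 0. intros b Hb. exact Hb.
    + intros a b Ha Hb. apply (@RInt_correct R_CompleteNormedModule), Hex; auto.
  - apply filterlim_locally. intros eps.
    destruct (is_lub_approx E l eps Hl (cond_pos eps))
      as [y [(a0 & b0 & Ha0 & Hab0 & ->) Hy]].
    exists (fun a => 0 < a < a0) (fun b => b0 < b).
    + exists (mkposreal a0 Ha0). intros a Ha Ha_pos. split; [exact Ha_pos |].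
      change (Rabs (a - 0) < a0) in Ha. apply Rabs_lt_between in Ha. lra.
    + exists b0. intros b Hb. exact Hb.
    + intros a b Ha Hb. simpl.
      assert (RInt f a0 b0 <= RInt f a b).
      { apply RInt_le_RInt_widen; try lra.
        - apply Hex; lra.
        - intros t Ht. apply Hpos. lra. }
      assert (RInt f a b <= l) by (apply Hle; lra).
      change (Rabs (RInt f a b - l) < eps). apply Rabs_lt_between. lra.
Qed.

Lemma at_right0_unit_interval : at_right 0 (fun q => 0 < q < 1).
Proof.
  exists (mkposreal 1 Rlt_0_1). intros q Hq Hq0.
  change (Rabs (q - 0) < 1) in Hq. apply Rabs_lt_between in Hq. lra.
Qed.

Lemma filterlim_at_right0_of_linear_bound (f : R -> R) (C : R) :
  (forall q, 0 < q < 1 -> Rabs (f q) <= C * q) -> filterlim f (at_right 0) (locally 0).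
Proof.
  intros Hf. apply filterlim_locally. intros eps.
  assert (HC : 0 < Rabs C + 1) by (pose proof (Rabs_pos C); lra).
  assert (Hd : 0 < Rmin 1 (eps / (Rabs C + 1)))
    by (apply Rmin_glb_lt; [lra | apply Rdiv_lt_0_compat; [apply cond_pos | exact HC]]).
  exists (mkposreal _ Hd). intros q Hq Hq0. simpl in Hq.
  change (Rabs (q - 0) < Rmin 1 (eps / (Rabs C + 1))) in Hq.
  rewrite Rminus_0_r, Rabs_pos_eq in Hq by lra.
  assert (Hq1 : q < 1) by (eapply Rlt_le_trans; [exact Hq | apply Rmin_l]).
  assert (Hqe : (Rabs C + 1) * q < eps).
  { assert (Hq' : q < eps / (Rabs C + 1)) by (eapply Rlt_le_trans; [exact Hq | apply Rmin_r]).
    apply (Rmult_lt_compat_l (Rabs C + 1)) in Hq'; [| exact HC].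
    replace ((Rabs C + 1) * (eps / (Rabs C + 1))) with (pos eps) in Hq' by (field; lra).
    exact Hq'. }
  change (Rabs (f q - 0) < eps). rewrite Rminus_0_r.
  pose proof (Hf q (conj Hq0 Hq1)). pose proof (Rle_abs C). nra.
Qed.

Lemma filterlim_RtoC {T : Type} (F : (T -> Prop) -> Prop) {FF : Filter F}
    (f : T -> R) (l : R) :
  filterlim f F (locally l) -> filterlim (fun x => RtoC (f x)) F (locally (RtoC l)).
Proof.
  intros Hf. apply (filterlim_comp _ _ _ f RtoC F (locally l)); [exact Hf |].
  apply filterlim_locally. intros eps. exists eps. intros y Hy.
  split; [exact Hy | apply ball_center].
Qed.

Lemma filterlim_Cplus {T : Type} (F : (T -> Prop) -> Prop) {FF : Filter F}
    (f g : T -> C) (a b : C) :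
  filterlim f F (locally a) -> filterlim g F (locally b) ->
  filterlim (fun x => Cplus (f x) (g x)) F (locally (Cplus a b)).
Proof.
  intros Hf Hg. apply (filterlim_comp_2 f g Cplus Hf Hg).
  apply (@filterlim_plus C_AbsRing C_NormedModule).
Qed.

Lemma filterlim_Cmult {T : Type} (F : (T -> Prop) -> Prop) {FF : Filter F}
    (f g : T -> C) (a b : C) :
  filterlim f F (locally a) -> filterlim g F (locally b) ->
  filterlim (fun x => Cmult (f x) (g x)) F (locally (Cmult a b)).
Proof.
  intros Hf Hg. apply (filterlim_comp_2 f g Cmult Hf Hg).
  intros P HP. apply locally_C in HP.
  destruct (@filterlim_mult C_AbsRing a b P HP) as [Q R HQ HR HQR].
  exists Q R; [apply locally_C; exact HQ | apply locally_C; exact HR | exact HQR].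
Qed.

Lemma filterlim_sum_n_m {T : Type} {K : AbsRing} {V : NormedModule K}
    (F : (T -> Prop) -> Prop) {FF : Filter F} (g : nat -> T -> V) (l : nat -> V) (a b : nat) :
  (forall i, (a <= i <= b)%nat -> filterlim (g i) F (locally (l i))) ->
  filterlim (fun x => sum_n_m (fun i => g i x) a b) F (locally (sum_n_m l a b)).
Proof.
  induction b as [| b IH]; intros Hg.
  - destruct a as [| a].
    + apply (filterlim_ext (g 0%nat)); [intros x; now rewrite sum_n_n |].
      rewrite sum_n_n. apply Hg. lia.
    + apply (filterlim_ext (fun _ => zero)); [intros x; now rewrite sum_n_m_zero by lia |].
      rewrite sum_n_m_zero by lia. apply filterlim_const.
  - destruct (Nat.le_gt_cases a (S b)) as [Hab | Hab].
    + apply (filterlim_ext (fun x => plus (sum_n_m (fun i => g i x) a b) (g (S b) x)));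
        [intros x; now rewrite sum_n_Sm |].
      rewrite sum_n_Sm by exact Hab.
      eapply filterlim_comp_2; [| apply Hg; lia | apply filterlim_plus].
      apply IH. intros i Hi. apply Hg. lia.
    + apply (filterlim_ext (fun _ => zero)); [intros x; now rewrite sum_n_m_zero by lia |].
      rewrite sum_n_m_zero by lia. apply filterlim_const.
Qed.

Definition Gamma_integrand (x t : R) : R := Rpower t (x - 1) * exp (- t).

Lemma Gamma_integrand_ge0 (x t : R) : 0 <= Gamma_integrand x t.
Proof. apply Rmult_le_pos; apply Rlt_le, exp_pos. Qed.

Lemma ex_RInt_Gamma_integrand (x a b : R) :
  0 < a -> 0 < b -> ex_RInt (Gamma_integrand x) a b.
Proof.
  intros Ha Hb. apply ex_RInt_of_ex_derive_pos; auto.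
  intros t Ht. unfold Gamma_integrand, Rpower. auto_derive. lra.
Qed.

Lemma Gamma_integrand_le_Rpower (x t : R) :
  0 < t -> Gamma_integrand x t <= Rpower t (x - 1).
Proof.
  intros Ht. unfold Gamma_integrand.
  assert (exp (- t) < 1) by (rewrite <- exp_0; apply exp_increasing; lra).
  assert (0 < Rpower t (x - 1)) by apply exp_pos.
  nra.
Qed.

Lemma Gamma_integrand_le_exp (x N t : R) :
  1 <= t -> x <= N -> 1 <= N ->
  Gamma_integrand x t <= exp (N * ln (2 * N) - t / 2).
Proof.
  intros Ht HxN HN. unfold Gamma_integrand, Rpower. rewrite <- exp_plus.
  apply Rlt_le, exp_increasing.
  (* t^N e^(-t/2) < (2N)^N is ln y < y at y = t / (2N). *)
  assert (Hlnt : 0 <= ln t) by (apply ln_ge0; auto).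
  assert (Hln : ln (t / (2 * N)) < t / (2 * N))
    by (apply ln_lt_self, Rdiv_lt_0_compat; lra).
  rewrite ln_div in Hln by lra.
  apply (Rmult_lt_compat_l N) in Hln; [| lra].
  replace (N * (t / (2 * N))) with (t / 2) in Hln by (field; lra).
  nra.
Qed.

Lemma RInt_Gamma_integrand_le (x N a b : R) :
  0 < x <= N -> 1 <= N -> 0 < a -> a < b ->
  RInt (Gamma_integrand x) a b <= 1 / x + 2 * exp (N * ln (2 * N)).
Proof.
  intros Hx HN Ha Hab.
  set (a' := Rmin a 1). set (b' := Rmax b 1).
  assert (Ha' : 0 < a' <= 1) by (split; [apply Rmin_glb_lt | apply Rmin_r]; lra).
  assert (Hb' : 1 <= b') by apply Rmax_r.
  assert (Hwiden : RInt (Gamma_integrand x) a b <= RInt (Gamma_integrand x) a' b').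
  { apply RInt_le_RInt_widen; [apply Rmin_l | lra | apply Rmax_l | |].
    - apply ex_RInt_Gamma_integrand; lra.
    - intros; apply Gamma_integrand_ge0. }
  assert (Hnear0 : RInt (Gamma_integrand x) a' 1 <= 1 / x).
  { apply Rle_trans with (RInt (fun t => Rpower t (x - 1)) a' 1).
    - apply RInt_le; [lra | apply ex_RInt_Gamma_integrand; lra | |].
      + apply ex_RInt_of_ex_derive_pos; try lra.
        intros t Ht. unfold Rpower. auto_derive. lra.
      + intros t Ht. apply Gamma_integrand_le_Rpower. lra.
    - rewrite RInt_Rpower_pred by lra.
      assert (0 < Rpower a' x) by apply exp_pos.
      apply Rmult_le_compat_r; [apply Rlt_le, Rinv_0_lt_compat |]; lra. }
  assert (Hnearoo : RInt (Gamma_integrand x) 1 b' <= 2 * exp (N * ln (2 * N))).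
  { apply Rle_trans with (RInt (fun t => exp (N * ln (2 * N) - t / 2)) 1 b').
    - apply RInt_le; [lra | apply ex_RInt_Gamma_integrand; lra | |].
      + apply ex_RInt_of_ex_derive_pos; try lra. intros t _. auto_derive. auto.
      + intros t Ht. apply Gamma_integrand_le_exp; lra.
    - apply RInt_exp_half_le. lra. }
  rewrite <- (RInt_Chasles _ a' 1 b') in Hwiden by (apply ex_RInt_Gamma_integrand; lra).
  unfold plus in Hwiden; simpl in Hwiden. lra.
Qed.

Lemma Gamma_unique (x l : R) :
  is_RInt_gen (Gamma_integrand x) (at_right 0) (Rbar_locally p_infty) l -> Gamma x = l.
Proof.
  intros H. change (RInt_gen (Gamma_integrand x) (at_right 0) (Rbar_locally p_infty) = l).
  apply (@is_RInt_gen_unique R_CompleteNormedModule); try exact H;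
    apply Proper_StrongProper; [apply at_right_proper_filter | apply Rbar_locally_filter].
Qed.

Lemma Gamma_bounds (x N : R) : 0 < x <= N -> 1 <= N ->
  (forall a b, 0 < a -> a < b -> RInt (Gamma_integrand x) a b <= Gamma x) /\
  Gamma x <= 1 / x + 2 * exp (N * ln (2 * N)).
Proof.
  intros Hx HN.
  destruct (is_RInt_gen_nonneg_bounded (Gamma_integrand x) (1 / x + 2 * exp (N * ln (2 * N))))
    as (l & Hl & Hsup & HlM).
  - apply ex_RInt_Gamma_integrand.
  - intros; apply Gamma_integrand_ge0.
  - intros; apply RInt_Gamma_integrand_le; auto.
  - rewrite (Gamma_unique x l Hl). auto.
Qed.

Lemma Gamma_lower (q : R) : 0 < q -> exp (-1) / (2 * q) <= Gamma q.
Proof.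
  intros Hq.
  (* On [a, 1], e^(-t) >= e^(-1), and a^q = 1/2 makes the integral of t^(q-1) equal 1/(2q). *)
  set (a := Rpower (1 / 2) (1 / q)).
  assert (Ha : 0 < a < 1).
  { split; [apply exp_pos |].
    rewrite <- exp_0. apply exp_increasing.
    assert (ln (1 / 2) < 0) by (rewrite <- ln_1; apply ln_increasing; lra).
    assert (0 < 1 / q) by (apply Rdiv_lt_0_compat; lra). nra. }
  assert (Haq : Rpower a q = 1 / 2).
  { unfold a. rewrite Rpower_mult. replace (1 / q * q) with 1 by (field; lra).
    apply Rpower_1. lra. }
  assert (Hpow : ex_RInt (fun t => Rpower t (q - 1)) a 1).
  { apply ex_RInt_of_ex_derive_pos; try lra. intros t Ht. unfold Rpower. auto_derive. lra. }
  apply Rle_trans with (RInt (Gamma_integrand q) a 1);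
    [| apply (Gamma_bounds q (q + 1)); lra].
  replace (exp (-1) / (2 * q)) with (RInt (fun t => scal (exp (-1)) (Rpower t (q - 1))) a 1).
  2: { rewrite (@RInt_scal R_CompleteNormedModule) by exact Hpow.
       rewrite RInt_Rpower_pred, Haq by lra.
       unfold scal; simpl; unfold mult; simpl. field. lra. }
  apply RInt_le; [lra | | apply ex_RInt_Gamma_integrand; lra |].
  - apply (@ex_RInt_scal R_CompleteNormedModule). exact Hpow.
  - intros t Ht. unfold Gamma_integrand, scal; simpl; unfold mult; simpl.
    rewrite Rmult_comm. apply Rmult_le_compat_l; [apply Rlt_le, exp_pos |].
    apply Rlt_le, exp_increasing. lra.
Qed.

Lemma Gamma_pos (q : R) : 0 < q -> 0 < Gamma q.
Proof.
  intros Hq. apply Rlt_le_trans with (2 := Gamma_lower q Hq).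
  apply Rdiv_lt_0_compat; [apply exp_pos | lra].
Qed.

Lemma RInt_Gamma_integrand_1 (a b : R) :
  0 < a -> 0 < b -> RInt (Gamma_integrand 1) a b = exp (- a) - exp (- b).
Proof.
  intros Ha Hb. apply is_RInt_unique.
  apply is_RInt_ext with (f := fun t => exp (- t)).
  { intros t _. unfold Gamma_integrand, Rpower.
    replace ((1 - 1) * ln t) with 0 by ring. rewrite exp_0. now rewrite Rmult_1_l. }
  replace (exp (- a) - exp (- b)) with (- exp (- b) - - exp (- a)) by ring.
  apply (@is_RInt_derive R_CompleteNormedModule (fun t => - exp (- t))).
  - intros t _. auto_derive; auto. ring.
  - intros t _. apply (@ex_derive_continuous R_AbsRing R_NormedModule). auto_derive. auto.
Qed.

Lemma Gamma_1 : Gamma 1 = 1.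
Proof.
  apply Rle_antisym.
  - destruct (is_RInt_gen_nonneg_bounded (Gamma_integrand 1) 1) as (l & Hl & _ & Hl1).
    + apply ex_RInt_Gamma_integrand.
    + intros; apply Gamma_integrand_ge0.
    + intros a b Ha Hab. rewrite RInt_Gamma_integrand_1 by lra.
      assert (exp (- a) < 1) by (rewrite <- exp_0; apply exp_increasing; lra).
      pose proof (exp_pos (- b)). lra.
    + rewrite (Gamma_unique 1 l Hl). exact Hl1.
  - apply Rle_plus_epsilon. intros eps Heps.
    (* The integral over [e, 1/e] already exceeds 1 - 2e. *)
    set (e := Rmin (eps / 2) (1 / 2)).
    assert (He : 0 < e <= eps / 2) by (split; [apply Rmin_glb_lt | apply Rmin_l]; lra).
    assert (He1 : e <= 1 / 2) by apply Rmin_r.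
    assert (Hinv : 2 <= 1 / e).
    { unfold Rdiv. rewrite Rmult_1_l. replace 2 with (/ (1 / 2)) by field.
      apply Rinv_le_contravar; lra. }
    assert (Hhead : 1 - e <= exp (- e)) by (pose proof (exp_ineq1_le (- e)); lra).
    assert (Htail : exp (- (1 / e)) < e).
    { rewrite exp_Ropp. replace e with (/ (1 / e)) at 2 by (field; lra).
      apply Rinv_lt_contravar; [pose proof (exp_pos (1 / e)); nra |].
      pose proof (exp_ineq1_le (1 / e)). lra. }
    assert (Hsup := proj1 (Gamma_bounds 1 1 ltac:(lra) ltac:(lra)) e (1 / e)).
    rewrite RInt_Gamma_integrand_1 in Hsup by lra. lra.
Qed.

Definition frac_weight (k : nat) (q : R) : R :=
  / Gamma q * (Gamma (INR k + q) / Gamma (INR k + 1)).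

Lemma frac_weight_0 (q : R) : 0 < q -> frac_weight 0 q = 1.
Proof.
  intros Hq. unfold frac_weight. rewrite INR_0, !Rplus_0_l, Gamma_1.
  pose proof (Gamma_pos q Hq). field. lra.
Qed.

Lemma frac_weight_linear_bound (k : nat) : (1 <= k)%nat ->
  exists C, forall q, 0 < q < 1 -> Rabs (frac_weight k q) <= C * q.
Proof.
  intros Hk. assert (Hk1 : 1 <= INR k) by (apply (le_INR 1); exact Hk).
  set (B := 1 + 2 * exp ((INR k + 1) * ln (2 * (INR k + 1)))).
  exists (2 * exp 1 * B * Rabs (/ Gamma (INR k + 1))). intros q Hq.
  assert (HGq : 0 < Gamma q) by (apply Gamma_pos; lra).
  assert (Hinv : / Gamma q <= 2 * exp 1 * q).
  { replace (2 * exp 1 * q) with (/ (exp (-1) / (2 * q))).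
    - apply Rinv_le_contravar; [| apply Gamma_lower; lra].
      apply Rdiv_lt_0_compat; [apply exp_pos | lra].
    - replace (exp (-1)) with (/ exp 1) by (rewrite <- exp_Ropp; f_equal; ring).
      pose proof (exp_pos 1). field. lra. }
  assert (HGk : 0 <= Gamma (INR k + q) <= B).
  { split; [apply Rlt_le, Gamma_pos; lra |].
    apply Rle_trans with (1 / (INR k + q) + 2 * exp ((INR k + 1) * ln (2 * (INR k + 1)))).
    - apply (Gamma_bounds (INR k + q) (INR k + 1)); lra.
    - unfold B. apply Rplus_le_compat_r.
      unfold Rdiv. rewrite Rmult_1_l, <- Rinv_1. apply Rinv_le_contravar; lra. }
  unfold frac_weight, Rdiv.
  rewrite !Rabs_mult, (Rabs_pos_eq (/ Gamma q)), (Rabs_pos_eq (Gamma (INR k + q)))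
    by (try apply Rlt_le, Rinv_0_lt_compat; lra).
  pose proof (Rabs_pos (/ Gamma (INR k + 1))).
  apply Rle_trans with (2 * exp 1 * q * (B * Rabs (/ Gamma (INR k + 1)))); [| nra].
  apply Rmult_le_compat; try nra. apply Rlt_le, Rinv_0_lt_compat. lra.
Qed.

Lemma frac_weight_lim (k : nat) : (1 <= k)%nat ->
  filterlim (frac_weight k) (at_right 0) (locally 0).
Proof.
  intros Hk. destruct (frac_weight_linear_bound k Hk) as [C HC].
  exact (filterlim_at_right0_of_linear_bound _ C HC).
Qed.

Lemma frac_julia_seq_S (q : R) (z0 : C) (z : nat -> C) (n : nat) :
  0 < q < 1 -> frac_julia_seq q z0 z ->
  z (S n) = Cplus z0 (Cplus
    (sum_n_m (fun i => Cmult (RtoC (frac_weight (S n - i) q))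
                             (Cmult (z (i - 1)%nat) (z (i - 1)%nat))) 1 n)
    (Cmult (z n) (z n))).
Proof.
  intros Hq [_ Hrec]. rewrite (Hrec (S n)) by lia. f_equal.
  assert (Hdistr : forall (a : C) (u : nat -> C) m p,
             Cmult a (sum_n_m u m p) = sum_n_m (fun k => Cmult a (u k)) m p)
    by (intros; exact (eq_sym (@sum_n_m_mult_l C_Ring a u m p))).
  rewrite Hdistr, sum_n_Sm by lia. change (plus ?x ?y) with (Cplus x y).
  f_equal.
  - apply sum_n_m_ext. intros i. unfold frac_weight. rewrite RtoC_mult. apply Cmult_assoc.
  - rewrite Nat.sub_diag, Nat.sub_succ, Nat.sub_0_r, Cmult_assoc, <- RtoC_mult.
    fold (frac_weight 0 q). rewrite frac_weight_0 by lra. apply Cmult_1_l.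
Qed.

Lemma frac_julia_seq_lim (z : R -> nat -> C) (z0 : C) :
  (forall q, 0 < q < 1 -> frac_julia_seq q z0 (z q)) ->
  forall n, filterlim (fun q => z q n) (at_right 0) (locally (Piter z0 (S n))).
Proof.
  intros Hz n. induction n as [[| n] IH] using Wf_nat.lt_wf_ind.
  - replace (Piter z0 1) with z0 by (simpl; unfold P; ring).
    apply (filterlim_ext_loc (fun _ => z0)); [| apply filterlim_const].
    apply (filter_imp _ _ (fun q Hq => eq_sym (proj1 (Hz q Hq)))), at_right0_unit_interval.
  - set (L i := Piter z0 (S (i - 1))).
    replace (Piter z0 (S (S n))) with
      (Cplus z0 (Cplus (sum_n_m (fun i => Cmult (RtoC 0) (Cmult (L i) (L i))) 1 n)
                       (Cmult (Piter z0 (S n)) (Piter z0 (S n))))).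
    2: { rewrite (sum_n_m_ext _ (fun _ => zero)), sum_n_m_const_zero
           by (intros; apply Cmult_0_l).
         simpl. unfold P. change (@zero C_AbelianMonoid) with (RtoC 0). ring. }
    apply (filterlim_ext_loc (fun q => Cplus z0 (Cplus
      (sum_n_m (fun i => Cmult (RtoC (frac_weight (S n - i) q))
                              (Cmult (z q (i - 1)%nat) (z q (i - 1)%nat))) 1 n)
      (Cmult (z q n) (z q n))))).
    { apply (filter_imp _ _ (fun q Hq => eq_sym (frac_julia_seq_S q z0 (z q) n Hq (Hz q Hq)))).
      apply at_right0_unit_interval. }
    apply (filterlim_Cplus (at_right 0)); [apply filterlim_const |].
    apply (filterlim_Cplus (at_right 0)).
    + apply (filterlim_sum_n_m (V := C_NormedModule) (at_right 0)
        (fun i q => Cmult (RtoC (frac_weight (S n - i) q))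
                          (Cmult (z q (i - 1)%nat) (z q (i - 1)%nat)))
        (fun i => Cmult (RtoC 0) (Cmult (L i) (L i)))).
      intros i Hi.
      apply (filterlim_Cmult (at_right 0)).
      * apply (filterlim_RtoC (at_right 0)), frac_weight_lim. lia.
      * apply (filterlim_Cmult (at_right 0)); apply IH; lia.
    + apply (filterlim_Cmult (at_right 0)); apply IH; lia.
Qed.

Lemma Mandelbrot_iff_bounded_orbit (a : C) :
  Mandelbrot a <-> exists M, forall n, Cmod (Piter a (S n)) <= M.
Proof.
  split; intros [M HM]; exists M.
  - intros n. apply HM. lia.
  - intros [| n] Hn; [lia | apply HM].
Qed.

Theorem proposition2 :
  forall z : R -> C -> nat -> C,
    (forall q z0, 0 < q < 1 -> frac_julia_seq q z0 (z q z0)) ->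
    (forall z0 (n : nat),
        filterlim (fun q => z q z0 n) (at_right 0) (locally (Piter z0 (S n))))
    /\
    (forall z0 (w : nat -> C),
        (forall n, filterlim (fun q => z q z0 n) (at_right 0) (locally (w n))) ->
        ((exists M : R, forall n, Cmod (w n) <= M) <-> Mandelbrot z0)).
Proof.
  intros z Hz.
  assert (Hlim : forall z0 n,
             filterlim (fun q => z q z0 n) (at_right 0) (locally (Piter z0 (S n))))
    by (intros z0; apply frac_julia_seq_lim; intros q Hq; apply Hz, Hq).
  split; [exact Hlim |].
  intros z0 w Hw.
  assert (Hw_orbit : forall n, w n = Piter z0 (S n)).
  { intros n. apply (@filterlim_locally_unique _ C_AbsRing C_NormedModule (at_right 0)
                       (Proper_StrongProper _ (at_right_proper_filter 0)) (fun q => z q z0 n)).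
    - apply Hw.
    - apply Hlim. }
  rewrite Mandelbrot_iff_bounded_orbit.
  split; intros [M HM]; exists M; intros n; [rewrite <- Hw_orbit | rewrite Hw_orbit]; apply HM.
Qed.
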